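(* Let $n\ge3$ and let $\alpha=(\alpha_1,\dots,\alpha_\ell)$ be a valid nonempty prefix with $\ell<n$. Partition $[n]\setminus\{\alpha_1,\dots,\alpha_\ell\}$ into maximal sets $P_1,\dots,P_m$ of consecutive integers and let $s_t=\sum_{p\in P_t}c_p$. Define $r_k^c$ by $\sum_{k\ge0}r_k^cx^k=\prod_{t=1}^mF_{s_t}(x)$. Then the number of ménage permutations in $S_n$ whose one-line notation begins with $\alpha$ equals $$\sum_{k=0}^{n-\ell}(-1)^k\,r_k^c\,(n-\ell-k)!.$$
   Context: A ménage permutation is $\pi\in S_n$ with $\pi(i)\ne i$ and $\pi(i)+1\not\equiv i\pmod n$ for all $i\in[n]$; it begins with prefix $\alpha$ if $\pi(k)=\alpha_k$ for $k\le\ell$; $\alpha$ is valid if some ménage permutation begins with it. For $i\notin\{\alpha_1,\dots,\alpha_\ell\}$: $c_i=0$ if $i<\ell$, $c_i=1$ if $i=\ell$ or $i=n$, $c_i=2$ if $\ell<i<n$. Fibonacci polynomials: $F_0(x)=1$, $F_1(x)=1+x$, $F_k(x)=xF_{k-2}(x)+F_{k-1}(x)$ for $k\ge2$. *)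

From mathcomp Require Import all_boot all_order all_algebra all_fingroup.
Set Implicit Arguments. Unset Strict Implicit. Unset Printing Implicit Defensive.
Import GRing.Theory.
Local Open Scope ring_scope.

(* Permutations of [n] are represented by s : 'S_n acting on 'I_n = {0..n-1};
   the 1-based value pi(i) is (s (i-1)).+1. *)

Definition oneline (n : nat) (s : 'S_n) : seq nat :=
  map (fun i : 'I_n => (s i).+1) (enum 'I_n).

(* Menage permutation: pi(i) <> i and pi(i)+1 <> i (mod n), for all i in [n]
   (position i = j.+1, value pi(i) = (s j).+1). *)
Definition menage (n : nat) (s : 'S_n) : bool :=
  [forall j : 'I_n, ((s j).+1 != j.+1)%N && ((s j).+2 %% n != j.+1 %% n)%N].

Definition begins_with (n : nat) (s : 'S_n) (alpha : seq nat) : bool :=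
  take (size alpha) (oneline s) == alpha.

Definition valid_prefix (n : nat) (alpha : seq nat) : Prop :=
  exists s : 'S_n, menage s && begins_with s alpha.

Definition remaining (n : nat) (alpha : seq nat) : seq nat :=
  [seq p <- iota 1 n | p \notin alpha].

Definition cval (n l i : nat) : nat :=
  if (i < l)%N then 0%N else if (i == l) || (i == n) then 1%N else 2%N.

Definition consec (P : seq nat) : Prop := exists a k, (0 < k)%N /\ P = iota a k.

Definition max_consec_partition (R : seq nat) (Ps : seq (seq nat)) : Prop :=
  perm_eq (flatten Ps) R /\
  forall P, P \in Ps ->
    consec P /\ {subset P <= R} /\
    (forall a k, {subset P <= iota a k} -> {subset iota a k <= R} ->
                 {subset iota a k <= P}).

Fixpoint fibpoly (k : nat) : {poly int} :=
  match k with
  | 0%N => 1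
  | 1%N => 1 + 'X
  | (S ((S k'') as k')) => 'X * fibpoly k'' + fibpoly k'
  end.

From mathcomp Require Import all_boot all_order all_algebra all_fingroup.
From mathcomp Require Import zify.
Import GRing.Theory.
Local Open Scope ring_scope.

Set Implicit Arguments. Unset Strict Implicit. Unset Printing Implicit Defensive.

(* A permutation s of 'I_n (0-based) is ménage iff it avoids, in every row j,
   the cells (j, j) and (j, j-1) (the latter read cyclically for j = 0).
   Listing these cells as t = 0, 1, 2, ... with row ⌈t/2⌉ and column ⌊t/2⌋
   turns them into a path: cells t and t+1 share a row or a column, so a set
   of cells is a rook placement iff it contains no two consecutive indices.

   Once the prefix alpha of length l is fixed, only the cells in rows >= l
   and in columns not used by alpha still matter: they form the "board".
   Inclusion–exclusion then yields the alternating sum of the theorem. *)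

(* The alternating sum over the subsets of B vanishes unless B is empty:
   toggling a fixed element x of B is a sign-reversing involution. *)
Lemma sum_powerset_sign (T : finType) (B : {set T}) :
  \sum_(U in powerset B) (-1) ^+ #|U| = (B == set0)%:R :> int.
Proof.
case: (set_0Vmem B) => [->|[x Bx]].
  by rewrite powerset0 big_set1 cards0 expr0 eqxx.
have -> : (B == set0) = false by apply/negbTE/set0Pn; exists x.
pose toggle (U : {set T}) := if x \in U then U :\ x else x |: U.
have toggleK : involutive toggle.
  move=> U; rewrite /toggle; case Ux: (x \in U); rewrite !inE eqxx /=.
    by rewrite setD1K.
  by rewrite setU1K // Ux.
have toggle_sub (U : {set T}) : U \subset B -> toggle U \subset B.
  move=> sUB; rewrite /toggle; case: ifP => _.
    exact: subset_trans (subsetDl _ _) sUB.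
  by rewrite subUset sub1set Bx.
have toggle_sign (U : {set T}) : (-1) ^+ #|toggle U| = - (-1) ^+ #|U| :> int.
  rewrite /toggle; case: ifP => Ux.
    by rewrite (cardsD1 x U) Ux add1n exprS mulN1r opprK.
  by rewrite cardsU1 Ux add1n exprS mulN1r.
set S := \sum_(U in powerset B) _.
have S_opp : S = - S.
  rewrite /S [LHS](reindex_inj (inv_inj toggleK)) /= -sumrN.
  apply: eq_big => [U|U _]; last by rewrite toggle_sign.
  rewrite !powersetE; apply/idP/idP; first by move/toggle_sub; rewrite toggleK.
  exact: toggle_sub.
by apply/eqP; rewrite mulr0n; lia.
Qed.

Lemma card_set_sum (T : finType) (P : pred T) :
  (#|[set w | P w]| : int) = \sum_w (P w)%:R.
Proof.
rewrite -natz -sum1_card big_mkcond /= natr_sum; apply: eq_bigr => w _.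
by rewrite inE; case: (P w).
Qed.

Lemma inclusion_exclusion (T I : finType) (S : pred T) (E : I -> pred T)
    (A : {set I}) :
  (#|[set w | S w && [forall i in A, ~~ E i w]]| : int) =
  \sum_(U in powerset A) (-1) ^+ #|U| *
     (#|[set w | S w && [forall i in U, E i w]]| : int).
Proof.
under eq_bigr do rewrite card_set_sum mulr_sumr.
rewrite exchange_big card_set_sum; apply: eq_bigr => w _.
have bad_subsets :
    \sum_(U in powerset A) (-1) ^+ #|U| * (S w && [forall i in U, E i w])%:R
  = (S w)%:R * \sum_(U in powerset (A :&: [set i | E i w])) (-1) ^+ #|U| :> int.
  rewrite mulr_sumr [RHS]big_mkcond [LHS]big_mkcond /=; apply: eq_bigr => U _.
  rewrite !powersetE subsetI.
  have -> : (U \subset [set i | E i w]) = [forall i in U, E i w].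
    apply/subsetP/forallP => [h i|h i Ui].
      by apply/implyP => /h; rewrite inE.
    by rewrite inE; move/implyP: (h i); apply.
  by case: (U \subset A); case: (S w); case: [forall i in U, E i w];
    rewrite ?mulr1 ?mul1r ?mulr0 ?mul0r.
rewrite bad_subsets sum_powerset_sign; case: (S w) => /=; last by rewrite !mul0r.
rewrite mul1r; congr ((nat_of_bool _)%:R).
apply/idP/idP => [/forallP h|/eqP h].
  apply/eqP/setP => i; rewrite !inE; case Ai: (i \in A) => //=.
  by move/implyP: (h i) => /(_ Ai) /negbTE ->.
apply/forallP => i; apply/implyP => Ai; apply/negP => Ei.
by have := in_set0 i; rewrite -h !inE Ai Ei.
Qed.

Lemma sum_powerset_setU (T : finType) (M : nmodType) (A B : {set T})
    (F : {set T} -> M) :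
  [disjoint A & B] ->
  \sum_(V in powerset (A :|: B)) F V =
  \sum_(V1 in powerset A) \sum_(V2 in powerset B) F (V1 :|: V2).
Proof.
move=> dAB; rewrite pair_big_dep /=.
pose D := [pred p : {set T} * {set T} |
           (p.1 \in powerset A) && (p.2 \in powerset B)].
have restrA (X Y : {set T}) : X \subset A -> Y \subset B -> (X :|: Y) :&: A = X.
  move=> sXA sYB; have dYA : [disjoint Y & A].
    by rewrite disjoint_sym; apply: disjointWr sYB dAB.
  by rewrite setIUl (setIidPl sXA) (disjoint_setI0 dYA) setU0.
have restrB (X Y : {set T}) : X \subset A -> Y \subset B -> (X :|: Y) :&: B = Y.
  move=> sXA sYB.
  by rewrite setIUl (setIidPl sYB) (disjoint_setI0 (disjointWl sXA dAB)) set0U.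
transitivity (\sum_(V in (fun p => p.1 :|: p.2) @: D) F V).
  apply: eq_bigl => V; apply/idP/imsetP.
    rewrite powersetE => sV; exists (V :&: A, V :&: B).
      by rewrite inE /= !powersetE !subsetIr.
    by rewrite /= -setIUr (setIidPl sV).
  by case=> p; rewrite inE /= !powersetE => /andP[? ?] ->; apply: setUSS.
rewrite big_imset; first by apply: eq_bigl => p; rewrite inE.
move=> [X1 Y1] [X2 Y2]; rewrite !inE /= => /andP[sX1 sY1] /andP[sX2 sY2] E.
congr (_, _); first by rewrite -(restrA _ _ sX1 sY1) E restrA.
by rewrite -(restrB _ _ sX1 sY1) E restrB.
Qed.

Lemma mem_bigcup_seq (I : Type) (T : finType) (r : seq I) (F : I -> {set T}) x :
  (x \in \bigcup_(i <- r) F i) = has (fun i => x \in F i) r.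
Proof. by elim: r => [|i r IH]; rewrite ?big_nil ?big_cons ?inE //= IH. Qed.

Section SparseSubsets.
Variable N : nat.

Definition sparse (V : {set 'I_N}) : bool :=
  [forall t in V, [forall u in V, t.+1 != u :> nat]].

Lemma sparseP (V : {set 'I_N}) :
  reflect (forall t u, t \in V -> u \in V -> t.+1 != u :> nat) (sparse V).
Proof.
apply: (iffP forallP) => [h t u Vt Vu|h t].
  by move/implyP: (h t) => /(_ Vt) /forallP /(_ u) /implyP /(_ Vu).
by apply/implyP => Vt; apply/forallP => u; apply/implyP => Vu; apply: h.
Qed.

Definition sparse_poly (U : {set 'I_N}) : {poly int} :=
  \sum_(V in powerset U | sparse V) 'X^#|V|.

Definition separated (A B : {set 'I_N}) : Prop :=
  forall a b, a \in A -> b \in B ->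
    [/\ a != b :> nat, a.+1 != b :> nat & b.+1 != a :> nat].

Lemma sparse_poly_coef_sum (U : {set 'I_N}) (m : nat) (f : nat -> int) :
  (forall V : {set 'I_N}, V \subset U -> sparse V -> #|V| <= m)%N ->
  \sum_(k < m.+1) (sparse_poly U)`_k * f k =
  \sum_(V in powerset U | sparse V) f #|V|.
Proof.
move=> card_le; under eq_bigr do rewrite coef_sum mulr_suml.
rewrite exchange_big /=; apply: eq_bigr => V; rewrite powersetE => /andP[sVU sV].
under eq_bigr do rewrite coefXn mulr_natl mulrb.
by rewrite -big_mkcond big_ord1_eq ltnS card_le.
Qed.

Lemma sparse_poly0 : sparse_poly set0 = 1.
Proof.
rewrite /sparse_poly powerset0 big_mkcondr big_set1 /=.
have -> : sparse set0 by apply/sparseP => t u; rewrite inE.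
by rewrite cards0 expr0.
Qed.

Lemma sparse_setU (A B : {set 'I_N}) :
  separated A B -> sparse (A :|: B) = sparse A && sparse B.
Proof.
move=> sepAB; apply/sparseP/andP => [h|[/sparseP hA /sparseP hB] t u].
  by split; apply/sparseP => t u Vt Vu; apply: h; rewrite inE ?Vt ?Vu ?orbT.
rewrite !inE => /orP[At|Bt] /orP[Au|Bu]; try by [apply: hA|apply: hB].
  by case: (sepAB t u At Bu).
by case: (sepAB u t Au Bt).
Qed.

Lemma sparse_setU1 (V : {set 'I_N}) (x : 'I_N) :
  (forall u : 'I_N, u \in V -> x.+1 != u :> nat) ->
  sparse (x |: V) = sparse V && [forall u in V, u.+1 != x :> nat].
Proof.
move=> x_last; apply/sparseP/andP => [h|[/sparseP hV /forallP hx] t u].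
  split; first by apply/sparseP => t u Vt Vu; apply: h; rewrite inE ?Vt ?Vu ?orbT.
  by apply/forallP => u; apply/implyP => Vu; apply: h; rewrite !inE ?Vu ?eqxx ?orbT.
rewrite !inE => /orP[/eqP ->|Vt] /orP[/eqP ->|Vu].
- by apply/eqP; lia.
- exact: x_last.
- by move/implyP: (hx t) => /(_ Vt).
- exact: hV.
Qed.

(* Sparse subsets of a union of separated sets are exactly the unions of
   sparse subsets of each, hence the polynomial is multiplicative. *)
Lemma sparse_polyU (A B : {set 'I_N}) :
  separated A B -> sparse_poly (A :|: B) = sparse_poly A * sparse_poly B.
Proof.
move=> sepAB.
have dAB : [disjoint A & B].
  rewrite -setI_eq0; apply/set0Pn => -[x]; rewrite inE => /andP[Ax Bx].
  by case: (sepAB x x Ax Bx); rewrite eqxx.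
rewrite /sparse_poly !big_mkcondr sum_powerset_setU // big_distrlr /=.
apply: eq_bigr => V1; rewrite powersetE => sV1A.
apply: eq_bigr => V2; rewrite powersetE => sV2B.
have sepV : separated V1 V2.
  move=> a b V1a V2b.
  by apply: sepAB; [apply: subsetP sV1A a V1a|apply: subsetP sV2B b V2b].
rewrite sparse_setU // cardsU (disjoint_setI0 (disjointW sV1A sV2B dAB)).
rewrite cards0 subn0 exprD.
by case: (sparse V1); case: (sparse V2); rewrite ?mulr0 ?mul0r.
Qed.

(* Deletion–contraction at an element x of U with no successor in U:
   a sparse subset either avoids x, or contains x and avoids x - 1. *)
Lemma sparse_poly_delete (U : {set 'I_N}) (x : 'I_N) :
  x \in U -> (forall u : 'I_N, u \in U -> x.+1 != u :> nat) ->
  sparse_poly U =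
  sparse_poly (U :\ x) +
  'X * sparse_poly ((U :\ x) :\: [set u : 'I_N | u.+1 == x :> nat]).
Proof.
move=> Ux x_last; set Ux' := U :\ x; set Pred := [set u : 'I_N | u.+1 == x :> nat].
have {1}-> : U = Ux' :|: [set x] by rewrite setUC setD1K.
have dUx : [disjoint Ux' & [set x]] by rewrite disjoint_sym disjoints1 !inE eqxx.
rewrite {1}/sparse_poly big_mkcondr sum_powerset_setU // powerset1.
rewrite /sparse_poly !big_mkcondr mulr_sumr.
rewrite [X in _ = _ + X]big_mkcond [X in _ = X + _]big_mkcond -big_split /=.
rewrite big_mkcond /=; apply: eq_bigr => V _.
case sVUx : (V \in powerset Ux'); last first.
  have -> : V \in powerset (Ux' :\: Pred) = false.
    apply/negbTE; apply: contraFN sVUx; rewrite !powersetE => sV.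
    exact: subset_trans sV (subsetDl _ _).
  by rewrite addr0.
rewrite big_setU1 ?big_set1 /=; last first.
  by rewrite inE; apply/eqP => /setP /(_ x); rewrite !inE eqxx.
rewrite setU0; move: sVUx; rewrite powersetE => sVUx.
have xV : x \notin V by apply/negP => /(subsetP sVUx); rewrite !inE eqxx.
rewrite (setUC V [set x]) cardsU1 xV add1n exprS sparse_setU1; last first.
  by move=> u /(subsetP sVUx); rewrite !inE => /andP[_ Uu]; apply: x_last.
have -> : (V \in powerset (Ux' :\: Pred)) = [forall u in V, u.+1 != x :> nat].
  rewrite powersetE; apply/subsetP/forallP => [h u|h u Vu].
    by apply/implyP => /h; rewrite !inE => /andP[].
  have := subsetP sVUx u Vu; rewrite !inE => /andP[-> ->]; rewrite !andbT.
  by move/implyP: (h u) => /(_ Vu).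
by case: (sparse V); case: [forall u in V, u.+1 != x :> nat];
  rewrite /= ?mulr0 ?addr0.
Qed.

(* On an interval of length k the sparse subsets are counted by the
   Fibonacci polynomial F_k, by deleting the last element. *)
Lemma sparse_poly_interval (lo k : nat) : (lo + k <= N)%N ->
  sparse_poly [set t : 'I_N | (lo <= t < lo + k)%N] = fibpoly k.
Proof.
elim/ltn_ind: k => [[|k]] IH le_N.
  have -> : [set t : 'I_N | (lo <= t < lo + 0)%N] = set0.
    by apply/setP => t; rewrite !inE; apply/negbTE; lia.
  by rewrite sparse_poly0.
have lt_N : (lo + k < N)%N by lia.
pose x := Ordinal lt_N.
rewrite (@sparse_poly_delete _ x); last 2 first.
- by rewrite inE /=; lia.
- by move=> u; rewrite inE /= => Uu; apply/eqP; lia.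
have -> : [set t : 'I_N | (lo <= t < lo + k.+1)%N] :\ x =
          [set t : 'I_N | (lo <= t < lo + k)%N].
  by apply/setP => t; rewrite !inE -(inj_eq val_inj) /=; apply/idP/idP; lia.
rewrite IH //; last by lia.
case: k IH le_N lt_N @x => [|k] IH le_N lt_N x.
  have -> : [set t : 'I_N | (lo <= t < lo + 0)%N] :\:
            [set u : 'I_N | u.+1 == x :> nat] = set0.
    by apply/setP => t; rewrite !inE /=; apply/negbTE; lia.
  by rewrite sparse_poly0 /= mulr1 addrC.
have -> : [set t : 'I_N | (lo <= t < lo + k.+1)%N] :\:
          [set u : 'I_N | u.+1 == x :> nat] = [set t : 'I_N | (lo <= t < lo + k)%N].
  by apply/setP => t; rewrite !inE /=; apply/idP/idP; lia.
by rewrite IH /= 1?addrC //; lia.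
Qed.

End SparseSubsets.

Section PrescribedValues.
Variable n : nat.
Local Close Scope ring_scope.

Definition satisfies (s : 'S_n) (L : seq ('I_n * 'I_n)) : bool :=
  all (fun p => s p.1 == p.2) L.

(* Constraints with distinct points and distinct values are satisfiable:
   correct a witness for the tail by a transposition. *)
Lemma exists_satisfying (L : seq ('I_n * 'I_n)) :
  uniq (map fst L) -> uniq (map snd L) -> exists g : 'S_n, satisfies g L.
Proof.
elim: L => [|p L IH] /=; first by exists 1%g.
case/andP=> p1 L1 /andP[p2 L2]; case: (IH L1 L2) => g gL.
exists (g * tperm (g p.1) p.2)%g; apply/andP; split.
  by rewrite permM tpermL.
apply/allP => q Lq; rewrite permM.
have gq : g q.1 = q.2 by apply/eqP; move/allP: gL => /(_ q Lq).
rewrite gq tpermD //.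
  rewrite -gq (inj_eq perm_inj); apply: contraNneq p1 => ->; exact: map_f.
by apply: contraNneq p2 => ->; exact: map_f.
Qed.

(* The permutations satisfying k such constraints are the products p * g
   with g one of them and p fixing the k constrained points: (n - k)! many. *)
Lemma card_satisfying (L : seq ('I_n * 'I_n)) :
  uniq (map fst L) -> uniq (map snd L) ->
  #|[set s : 'S_n | satisfies s L]| = (n - size L)`!.
Proof.
move=> U1 U2; have [g gL] := exists_satisfying U1 U2.
pose D := [set x | x \in map fst L].
have -> : [set s : 'S_n | satisfies s L] = [set (p * g)%g | p in perm_on (~: D)].
  apply/setP => s; rewrite inE; apply/idP/imsetP.
    move=> sL; exists (s * g^-1)%g; last by rewrite -mulgA mulVg mulg1.
    apply/subsetP => x; rewrite inE permM => moved.
    rewrite inE; apply: contra moved.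
    rewrite inE => /mapP [q Lq ->].
    by rewrite (eqP (allP sL q Lq)) -(eqP (allP gL q Lq)) permK.
  case=> p onp ->; apply/allP => q Lq; rewrite permM (out_perm onp).
    exact: allP gL q Lq.
  by rewrite !inE negbK; exact: map_f.
rewrite card_imset; last exact: mulIg.
have cardD : #|D| = size L by rewrite cardsE (card_uniqP U1) size_map.
have := cardsC D; rewrite card_ord cardD card_perm => partition_n.
by rewrite (canRL (addKn _) partition_n).
Qed.

End PrescribedValues.

Section MenageBoard.
Variables (n' : nat) (alpha : seq nat).
Local Close Scope ring_scope.
Local Notation n := n'.+1.
Local Notation N := n.*2.
Local Notation l := (size alpha).
Local Notation R := (remaining n alpha).

(* Cell t of the forbidden path lies in row ⌈t/2⌉ and column ⌊t/2⌋:
   even t = 2j is the cell (j, j), odd t = 2j - 1 the cell (j, j - 1). *)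
Definition cell_row (t : nat) : 'I_n := inord (t.+1)./2.
Definition cell_col (t : nat) : 'I_n := inord t./2.

(* On the index range 0 <= t < 2n - 1 no truncation by inord occurs. *)
Lemma cell_rowE (t : nat) : t < N.-1 -> cell_row t = (t.+1)./2 :> nat.
Proof. by move=> lt_t; rewrite /cell_row inordK // -divn2; lia. Qed.

Lemma cell_colE (t : nat) : t < N.-1 -> cell_col t = t./2 :> nat.
Proof. by move=> lt_t; rewrite /cell_col inordK // -divn2; lia. Qed.

Lemma cell_at (j v : nat) : j < n -> v < n -> v = j \/ v.+1 = j ->
  [/\ j + v < N.-1, cell_row (j + v) = j :> nat & cell_col (j + v) = v :> nat].
Proof.
move=> lt_jn lt_vn jv; have lt_t : j + v < N.-1 by lia.
by split; rewrite // ?cell_rowE ?cell_colE // -divn2; lia.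
Qed.

Lemma cell_row_eq (t u : nat) : t < N.-1 -> u < N.-1 ->
  cell_row t = cell_row u -> [|| t == u, t.+1 == u | u.+1 == t].
Proof.
move=> lt_t lt_u /(congr1 (@nat_of_ord _)); rewrite !cell_rowE // -!divn2 => E.
have : t = u \/ t.+1 = u \/ u.+1 = t by lia.
by case=> [->|[->|->]]; rewrite eqxx ?orbT.
Qed.

Lemma cell_col_eq (t u : nat) : t < N.-1 -> u < N.-1 ->
  cell_col t = cell_col u -> [|| t == u, t.+1 == u | u.+1 == t].
Proof.
move=> lt_t lt_u /(congr1 (@nat_of_ord _)); rewrite !cell_colE // -!divn2 => E.
have : t = u \/ t.+1 = u \/ u.+1 = t by lia.
by case=> [->|[->|->]]; rewrite eqxx ?orbT.
Qed.

Lemma consecutive_cells (t : nat) : t.+1 < N.-1 ->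
  (cell_row t == cell_row t.+1) = (cell_col t != cell_col t.+1).
Proof.
by move=> lt_t; rewrite -!(inj_eq val_inj) /= !cell_rowE ?cell_colE //; lia.
Qed.

Lemma menage_cond (j v : nat) : 1 <= j < n -> v < n ->
  (v.+1 != j.+1) && (v.+2 %% n != j.+1 %% n) = (v != j) && (v.+1 != j).
Proof.
move=> /andP[ge_j1 lt_jn] lt_vn; rewrite eqSS; congr (_ && ~~ _).
have mod_lt2n y : y < N -> y %% n = if y < n then y else y - n.
  move=> lt_y; case: ifP => [lt_yn|ge_yn]; first exact: modn_small.
  have -> : y = (y - n) + n by lia.
  by rewrite modnDr modn_small; lia.
rewrite !mod_lt2n; try lia.
by case: ifP; case: ifP => ? ?; apply/eqP/eqP; lia.
Qed.

(* The board: the forbidden cells in rows l, ..., n - 1 whose column is not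
   a value of alpha.  Index 2n - 1 would be the cyclic cell (0, n - 1). *)
Definition board : {set 'I_N} :=
  [set t : 'I_N | (l.*2.-1 <= t) && (t < N.-1) && ((t./2).+1 \notin alpha)].

Lemma boardP (t : 'I_N) : t \in board ->
  [/\ l.*2.-1 <= t, t < N.-1 & (t./2).+1 \notin alpha].
Proof. by rewrite inE => /andP[/andP[-> ->] ->]. Qed.

Lemma sparse_near_eq (V : {set 'I_N}) (t u : 'I_N) : sparse V ->
  t \in V -> u \in V -> [|| t == u :> nat, t.+1 == u | u.+1 == t] -> t = u.
Proof.
move=> /sparseP sV Vt Vu /or3P[/eqP/ord_inj //|/eqP E|/eqP E].
  by move: (sV t u Vt Vu); rewrite E eqxx.
by move: (sV u t Vu Vt); rewrite E eqxx.
Qed.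

Lemma mem_remaining (x : nat) : (x \in R) = (1 <= x <= n) && (x \notin alpha).
Proof.
by rewrite mem_filter mem_iota andbC; congr (_ && _); apply/idP/idP; lia.
Qed.

Definition maximal_run (P : seq nat) : Prop :=
  consec P /\ {subset P <= R} /\
  (forall a k, {subset P <= iota a k} -> {subset iota a k <= R} ->
               {subset iota a k <= P}).

Lemma maximal_run_adjacent (P : seq nat) (c d : nat) : maximal_run P ->
  c \in P -> d \in R -> d = c.+1 \/ d.+1 = c -> d \in P.
Proof.
case=> [[a [k [k_gt0 ->]]] [sub_PR maxP]] cP dR cd.
have /andP[ge_ca lt_ca] : a <= c < a + k by rewrite -mem_iota.
pose a' := minn a d; pose k' := (maxn (a + k) d.+1 - a').
have extended_run : {subset iota a' k' <= iota a k}.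
  apply: maxP => x; rewrite mem_iota => /andP[ge_x lt_x].
  - by rewrite mem_iota; lia.
  - case: (eqVneq x d) => [-> //|ne_xd]; apply: sub_PR; rewrite mem_iota; lia.
by apply: extended_run; rewrite mem_iota; lia.
Qed.

(* The board cells in the columns before column b (1-based): they are the
   indices t with 2l - 1 <= t < cells_before b. *)
Definition cells_before (b : nat) : nat := minn (maxn (b.*2 - 2) l.*2.-1) N.-1.

Definition board_block (P : seq nat) : {set 'I_N} :=
  [set t : 'I_N | (l.*2.-1 <= t) && (t < N.-1) && ((t./2).+1 \in P)].

Lemma board_block_iota (a k : nat) : 1 <= a -> a + k <= n.+1 ->
  board_block (iota a k) =
  [set t : 'I_N | cells_before a <= t < cells_before a +
                  (cells_before (a + k) - cells_before a)].
Proof.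
move=> ge_a1 le_akn; apply/setP => t; rewrite !inE mem_iota /cells_before.
by rewrite -!muln2 -!divn2; apply/idP/idP; lia.
Qed.

(* Blocks of disjoint maximal runs are separated: their columns differ by
   at least two, so their cell indices differ by at least three. *)
Lemma separated_blocks (P Q : seq nat) : maximal_run P -> maximal_run Q ->
  (forall x, x \in Q -> x \notin P) -> separated (board_block P) (board_block Q).
Proof.
move=> runP [_ [sub_QR _]] disjQP t u.
rewrite !inE => /andP[/andP[_ lt_t] tP] /andP[/andP[_ lt_u] uQ].
have uR := sub_QR _ uQ; have uP := disjQP _ uQ.
have far : (t./2).+2 <= u./2 \/ (u./2).+2 <= t./2.
  have ne1 : (u./2).+1 != (t./2).+1 by apply: contraNneq uP => ->.
  have ne2 : (u./2).+1 != (t./2).+2.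
    by apply: contraNneq uP => E; apply: maximal_run_adjacent runP tP uR _; left.
  have ne3 : (u./2).+2 != (t./2).+1.
    by apply: contraNneq uP => E; apply: maximal_run_adjacent runP tP uR _; right.
  lia.
by move: far; rewrite -!divn2 => far; split; apply/eqP; lia.
Qed.

Lemma board_blocks (Ps : seq (seq nat)) : max_consec_partition R Ps ->
  board = \bigcup_(P <- Ps) board_block P.
Proof.
case=> perm_Ps _; apply/setP => t; rewrite mem_bigcup_seq inE.
case in_range: ((l.*2.-1 <= t) && (t < N.-1)) => /=; last first.
  by apply/esym/hasPn => P _; rewrite inE in_range.
have -> : ((t./2).+1 \notin alpha) = ((t./2).+1 \in R).
  rewrite mem_remaining; move: in_range; rewrite -!muln2 -divn2.
  by case/andP => _ lt_t; rewrite (_ : 1 <= _ <= n) //; lia.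
rewrite -(perm_mem perm_Ps); apply/flattenP/hasP => -[P Ps_P tP];
  by exists P => //; move: tP; rewrite inE in_range.
Qed.

Hypothesis l_lt_n : l < n.

(* Column p of the board carries exactly c_p cells. *)
Lemma cells_before_succ (p : nat) : 1 <= p <= n ->
  cells_before p.+1 = cells_before p + cval n l p.
Proof.
rewrite /cells_before /cval -!muln2 => range_p.
case: (ltnP p l) => [lt_pl|ge_pl]; first lia.
by case: ifP => [/orP[/eqP|/eqP]|/norP[/eqP ne_pl /eqP ne_pn]]; lia.
Qed.

Lemma sum_cval_iota (a k : nat) : 1 <= a -> a + k <= n.+1 ->
  \sum_(p <- iota a k) cval n l p = cells_before (a + k) - cells_before a.
Proof.
move=> ge_a1; elim: k => [|k IH] le_akn; first by rewrite big_nil addn0 subnn.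
rewrite -addn1 iotaD big_cat big_seq1 /= IH; last lia.
rewrite addn1 addnS cells_before_succ; last lia.
have : cells_before a <= cells_before (a + k) by rewrite /cells_before -!muln2; lia.
lia.
Qed.

Lemma sparse_poly_block (P : seq nat) : maximal_run P ->
  sparse_poly (board_block P) = fibpoly (\sum_(p <- P) cval n l p).
Proof.
case=> [[a [k [k_gt0 ->]]] [sub_PR _]].
have ge_a1 : 1 <= a.
  have : a \in R by apply: sub_PR; rewrite mem_iota; lia.
  by rewrite mem_remaining => /andP[/andP[]].
have le_akn : a + k <= n.+1.
  have : (a + k).-1 \in R by apply: sub_PR; rewrite mem_iota; lia.
  by rewrite mem_remaining => /andP[/andP[_ ?] _]; lia.
rewrite board_block_iota // sum_cval_iota // sparse_poly_interval //.
by rewrite /cells_before -!muln2; lia.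
Qed.

Lemma sparse_poly_blocks (Qs : seq (seq nat)) : uniq (flatten Qs) ->
  (forall P, P \in Qs -> maximal_run P) ->
  sparse_poly (\bigcup_(P <- Qs) board_block P) =
  (\prod_(P <- Qs) fibpoly (\sum_(p <- P) cval n l p))%R.
Proof.
elim: Qs => [|P Qs IH] /=; first by rewrite !big_nil sparse_poly0.
rewrite cat_uniq => /and3P[_ disj uQs] runs.
have runP : maximal_run P by apply: runs; rewrite inE eqxx.
rewrite !big_cons sparse_polyU; last first.
  move=> t u tP; rewrite mem_bigcup_seq => /hasP [Q Qs_Q uQ].
  have runQ : maximal_run Q by apply: runs; rewrite inE Qs_Q orbT.
  have disjQP x : x \in Q -> x \notin P.
    move=> xQ; apply: contra disj => xP; apply/hasP; exists x => //.
    by apply/flattenP; exists Q.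
  exact: separated_blocks runP runQ disjQP t u tP uQ.
rewrite sparse_poly_block // IH // => Q Qs_Q.
by apply: runs; rewrite inE Qs_Q orbT.
Qed.

Lemma sparse_poly_board (Ps : seq (seq nat)) : max_consec_partition R Ps ->
  sparse_poly board = (\prod_(P <- Ps) fibpoly (\sum_(p <- P) cval n l p))%R.
Proof.
move=> partPs; rewrite (board_blocks partPs) sparse_poly_blocks //.
  by case: partPs => perm_Ps _; rewrite (perm_uniq perm_Ps) filter_uniq ?iota_uniq.
by move=> P Ps_P; case: partPs => _ /(_ P Ps_P).
Qed.

Section Prefix.
Variable s0 : 'S_n.
Hypotheses (l_gt0 : 0 < l) (s0_menage : menage s0).
Hypothesis s0_alpha : begins_with s0 alpha.

(* The permutations beginning with alpha are those agreeing with the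
   witness s0 on the first l positions. *)
Definition agrees (s : 'S_n) : bool :=
  [forall j : 'I_n, (j < l) ==> (s j == s0 j)].

Lemma mem_take_enum (j : 'I_n) : (j \in take l (enum 'I_n)) = (j < l).
Proof.
rewrite -(mem_map val_inj) map_take val_enum_ord take_iota mem_iota /=.
by rewrite leq_min ltn_ord andbT.
Qed.

Lemma alpha_values : alpha = map (fun i : 'I_n => (s0 i).+1) (take l (enum 'I_n)).
Proof. by move/eqP: s0_alpha; rewrite /oneline -map_take => {1}<-. Qed.

Lemma mem_alpha (v : nat) :
  (v.+1 \in alpha) = [exists j : 'I_n, (j < l) && (s0 j == v :> nat)].
Proof.
rewrite {1}alpha_values; apply/mapP/existsP => [[i Hi [E]]|[j /andP[Hj /eqP E]]].
  by exists i; rewrite -mem_take_enum Hi E eqxx.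
by exists j; rewrite ?mem_take_enum // E.
Qed.

Lemma begins_with_agrees (s : 'S_n) : begins_with s alpha = agrees s.
Proof.
rewrite /begins_with {2}alpha_values /oneline -map_take.
apply/eqP/forallP => [E j|h].
  apply/implyP => Hj; rewrite -mem_take_enum in Hj.
  by move: ((proj2 (eq_in_map _ _ _) E) j Hj) => /= [] /val_inj ->.
apply/eq_in_map => j; rewrite mem_take_enum => Hj.
by move/implyP: (h j) => /(_ Hj) /eqP ->.
Qed.

Lemma agrees_new_value (s : 'S_n) (j : 'I_n) :
  agrees s -> l <= j -> (s j).+1 \notin alpha.
Proof.
move=> /forallP agree_s le_lj; rewrite mem_alpha.
apply/existsP => -[i /andP[lt_il /eqP s0i]].
have : s i = s j by apply: ord_inj; rewrite (eqP (implyP (agree_s i) lt_il)) s0i.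
by move/perm_inj => Eij; move: lt_il; rewrite Eij ltnNge le_lj.
Qed.

Lemma menage_board (s : 'S_n) : agrees s ->
  menage s = [forall t in board, s (cell_row t) != cell_col t].
Proof.
move=> agree_s; apply/forallP/forallP => [men t|avoid j].
  apply/implyP => /boardP[ge_t lt_t _]; set j := cell_row t.
  have ge_j : l <= j by rewrite /j cell_rowE // -divn2; lia.
  move: (men j); rewrite -(inj_eq val_inj) /= menage_cond ?ltn_ord //; last lia.
  apply: contraTneq => ->; rewrite cell_colE // /j cell_rowE // -!divn2.
  by apply/nandP; case: (boolP (odd t)); lia.
case: (ltnP j l) => [lt_jl|ge_jl].
  have := forallP agree_s j; rewrite lt_jl => /eqP ->; exact: forallP s0_menage j.
rewrite menage_cond ?ltn_ord //; last lia.
rewrite -negb_or; apply/negP => forbidden.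
have [lt_t row_t col_t] : [/\ j + s j < N.-1, cell_row (j + s j) = j :> nat
                          & cell_col (j + s j) = s j :> nat].
  by apply: cell_at; rewrite ?ltn_ord //; case/orP: forbidden => /eqP; auto.
have lt_tN : j + s j < N by lia.
move: (avoid (Ordinal lt_tN)); rewrite inE /= (ord_inj row_t) (ord_inj col_t).
have -> : ((j + s j)./2).+1 = (s j).+1 by rewrite -(cell_colE lt_t) col_t.
by rewrite agrees_new_value // eqxx implybF andbT; lia.
Qed.

Section RookPlacement.
Variable U : {set 'I_N}.
Hypothesis U_board : U \subset board.

Definition rook_constraints : seq ('I_n * 'I_n) :=
  [seq (j, s0 j) | j <- take l (enum 'I_n)] ++
  [seq (cell_row t, cell_col t) | t : 'I_N <- enum U].

Lemma size_rook_constraints : size rook_constraints = l + #|U|.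
Proof.
by rewrite size_cat !size_map size_takel ?size_enum_ord ?cardE // ltnW.
Qed.

Lemma rook_rows_uniq : sparse U -> uniq (map fst rook_constraints).
Proof.
move=> sU; rewrite map_cat -!map_comp (eq_map (_ : fst \o _ =1 id)) // map_id.
rewrite cat_uniq take_uniq ?enum_uniq //= map_inj_in_uniq ?enum_uniq ?andbT;
  last first.
  move=> t u; rewrite !mem_enum => Ut Uu /= E.
  have [_ lt_t _] := boardP (subsetP U_board t Ut).
  have [_ lt_u _] := boardP (subsetP U_board u Uu).
  exact: sparse_near_eq sU Ut Uu (cell_row_eq lt_t lt_u E).
apply/hasPn => j /mapP [t Ut ->]; rewrite mem_take_enum -leqNgt.
rewrite mem_enum in Ut; have [ge_t lt_t _] := boardP (subsetP U_board t Ut).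
by rewrite cell_rowE // -divn2; lia.
Qed.

Lemma rook_cols_uniq : sparse U -> uniq (map snd rook_constraints).
Proof.
move=> sU; rewrite map_cat -!map_comp cat_uniq.
rewrite map_inj_uniq ?take_uniq ?enum_uniq //=; last exact: perm_inj.
rewrite map_inj_in_uniq ?enum_uniq ?andbT; last first.
  move=> t u; rewrite !mem_enum => Ut Uu /= E.
  have [_ lt_t _] := boardP (subsetP U_board t Ut).
  have [_ lt_u _] := boardP (subsetP U_board u Uu).
  exact: sparse_near_eq sU Ut Uu (cell_col_eq lt_t lt_u E).
apply/hasPn => v /mapP [t Ut ->]; apply/negP => /mapP [j Hj /= E].
rewrite mem_enum in Ut; have [_ lt_t new_col] := boardP (subsetP U_board t Ut).
move: new_col; rewrite mem_alpha => /existsP; apply; exists j.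
by rewrite -mem_take_enum Hj -cell_colE // E eqxx.
Qed.

(* A sparse set of board cells has at most n - l cells: one rook per free row. *)
Lemma sparse_board_card : sparse U -> l + #|U| <= n.
Proof.
move/rook_rows_uniq/card_uniqP; rewrite size_map size_rook_constraints => <-.
by apply: leq_trans (max_card _) _; rewrite card_ord.
Qed.

(* The extensions of the prefix with rooks on all cells of U: (n - l - #|U|)!
   of them if U is sparse, none otherwise since two consecutive cells would
   put two rooks in a common row or column. *)
Lemma card_agrees_rooks :
  #|[set s : 'S_n | agrees s && [forall t in U, s (cell_row t) == cell_col t]]| =
  if sparse U then (n - l - #|U|)`! else 0.
Proof.
case: ifP => [sU|/negbT nsU].
  have -> : [set s : 'S_n | agrees s && [forall t in U, s (cell_row t) == cell_col t]]
            = [set s : 'S_n | satisfies s rook_constraints].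
    apply/setP => s; rewrite !inE /satisfies all_cat !all_map.
    congr (_ && _); apply/forallP/allP => [h x|h x].
    - by rewrite mem_take_enum => lt_xl /=; apply: (implyP (h x)).
    - by apply/implyP; rewrite -mem_take_enum; apply: h.
    - by rewrite mem_enum => Ux /=; apply: (implyP (h x)).
    - by apply/implyP; rewrite -mem_enum; apply: h.
  rewrite card_satisfying ?rook_rows_uniq ?rook_cols_uniq //.
  by rewrite size_rook_constraints subnDA.
apply/eqP; rewrite cards_eq0; apply/eqP/setP => s; rewrite !inE.
apply/negP => /andP [_ /forallP rooks].
move: nsU => /sparseP; apply => t u Ut Uu; apply/eqP => succ_tu.
have [_ lt_t _] := boardP (subsetP U_board t Ut).
have [_ lt_u _] := boardP (subsetP U_board u Uu).
have rook_t := eqP (implyP (rooks t) Ut); have rook_u := eqP (implyP (rooks u) Uu).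
have := consecutive_cells (_ : t.+1 < N.-1); rewrite succ_tu => /(_ lt_u).
case: (eqVneq (cell_row t) (cell_row u)) => [same_row|diff_row].
  by rewrite -rook_t -rook_u same_row eqxx.
by rewrite -rook_t -rook_u (inj_eq perm_inj) (negbTE diff_row).
Qed.

End RookPlacement.

Lemma menage_prefix_set :
  [set s : 'S_n | menage s && begins_with s alpha] =
  [set s | agrees s && [forall t in board, ~~ (s (cell_row t) == cell_col t)]].
Proof.
apply/setP => s; rewrite !inE begins_with_agrees.
by case agree_s: (agrees s); rewrite ?andbF //= andbT (menage_board agree_s).
Qed.

Lemma card_menage_prefix :
  (#|[set s : 'S_n | menage s && begins_with s alpha]|%:Z =
   \sum_(U in powerset board | sparse U) (-1) ^+ #|U| * ((n - l - #|U|)%N`!)%:Z)%R.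
Proof.
rewrite menage_prefix_set.
rewrite (inclusion_exclusion agrees
           (fun (t : 'I_N) (s : 'S_n) => s (cell_row t) == cell_col t)).
rewrite big_mkcondr; apply: eq_bigr => U; rewrite powersetE => U_board.
by rewrite card_agrees_rooks //; case: ifP; rewrite ?mulr0.
Qed.

End Prefix.

End MenageBoard.

Unset Implicit Arguments.

Theorem mainTheorem10 (n : nat) (alpha : seq nat) (Ps : seq (seq nat)) :
  (3 <= n)%N ->
  (0 < size alpha)%N -> (size alpha < n)%N ->
  valid_prefix n alpha ->
  max_consec_partition (remaining n alpha) Ps ->
  let l := size alpha in
  let r := fun k : nat =>
    (\prod_(P <- Ps) fibpoly (\sum_(p <- P) cval n l p)%N)`_k in
  (#|[set s : 'S_n | menage s && begins_with s alpha]|%:Z =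
   \sum_(k < (n - l).+1) (-1) ^+ k * r k * ((n - l - k)`!)%:Z).
Proof.
case: n => [//|n'] _ l_gt0 l_lt_n [s0 /andP[s0_menage s0_alpha]] partPs l r.
rewrite (card_menage_prefix l_lt_n l_gt0 s0_menage s0_alpha).
rewrite -(@sparse_poly_coef_sum _ _ (n'.+1 - l)
           (fun k => (-1) ^+ k * ((n'.+1 - l - k)`!)%:Z)); last first.
  move=> U U_board sU.
  have := sparse_board_card l_lt_n l_gt0 s0_menage s0_alpha U_board sU; lia.
rewrite /r -(sparse_poly_board l_lt_n partPs); apply: eq_bigr => k _.
by rewrite mulrCA mulrA.
Qed.
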